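(* Let $G$ be a connected threshold graph of order $n\ge 4$ and size $m$ with $n-1<m<\binom{n}{2}$, with $c$ type 1 vertices, forward one position sequence $(f_1,\ldots,f_c)$ and numbers $F_p$ as in the context. Let $\Phi\in\mathbb{R}^{c\times c}$ be given by $\Phi_{ij}=f_{\min\{i,j\}}$ and let $\mathbf{1}\in\mathbb{R}^{c}$ be the all-ones vector. Then $F_p=\mathbf{1}^\intercal\Phi^p\mathbf{1}$ for every $p\in\mathbb{N}_0$.
   Context: A threshold graph is a simple graph whose vertices can be ordered $v_1,\ldots,v_n$ so that for each $2\le i\le n$, $v_i$ is either adjacent to all of $v_1,\ldots,v_{i-1}$ (then $a_i=1$) or to none of them (then $a_i=0$); by convention $a_1=1$. Vertex $v_i$ is of type 1 if $a_i=1$ and of type 0 if $a_i=0$; $c$ and $z$ are the numbers of type 1 and type 0 vertices. The backwards zero position sequence $(b_1,\ldots,b_z)$: $b_i$ is the number of type 1 vertices appearing after the $i$-th type 0 vertex in the order $v_1,\ldots,v_n$. The forward one position sequence $(f_1,\ldots,f_c)$: $f_i$ is the number of type 0 vertices appearing before the $i$-th type 1 vertex in the order $v_1,\ldots,v_n$. Define $F_0=c$ and for $p\ge1$, $F_p=\sum_{i_1,\ldots,i_p=1}^{z} b_{i_1}\min\{b_{i_1},b_{i_2}\}\cdots\min\{b_{i_{p-1}},b_{i_p}\}\,b_{i_p}$ (with $F_1=\sum_i b_i^2$); $F_p$ equals the number of lazy walks in $G$ whose type sequence is $1\,0^{s_1}\,1\cdots1\,0^{s_p}\,1$ for any fixed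 $s_1,\ldots,s_p\ge1$. *)

From mathcomp Require Import all_boot all_order all_algebra.
Set Implicit Arguments. Unset Strict Implicit. Unset Printing Implicit Defensive.
Import GRing.Theory Num.Theory.

(* A threshold graph is given by its creation sequence a = [a_1; ...; a_n]
   (0-indexed here: vertex v_(i+1) is the ordinal i : 'I_n, its type is
   nth false a i, true = type 1).  By convention a_1 = 1. *)

Definition ttype (a : seq bool) (i : nat) : bool := nth false a i.

Definition tadj (a : seq bool) : rel 'I_(size a) :=
  fun i j => (i != j) && ttype a (maxn i j).
Arguments tadj : clear implicits.

Definition tconnected (a : seq bool) : Prop :=
  forall i j : 'I_(size a), connect (tadj a) i j.

Definition th_size (a : seq bool) : nat :=
  #|[set e : 'I_(size a) * 'I_(size a) | (e.1 < e.2)%N && tadj a e.1 e.2]|.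

Definition nb_one (a : seq bool) : nat := count id a.
Definition nb_zero (a : seq bool) : nat := count negb a.

Definition zero_pos (a : seq bool) : seq nat :=
  [seq i <- iota 0 (size a) | ~~ ttype a i].
Definition one_pos (a : seq bool) : seq nat :=
  [seq i <- iota 0 (size a) | ttype a i].

Definition bzps (a : seq bool) : seq nat :=
  [seq count id (drop i.+1 a) | i <- zero_pos a].
Definition fops (a : seq bool) : seq nat :=
  [seq count negb (take i a) | i <- one_pos a].

Definition th_F (a : seq bool) (p : nat) : nat :=
  match p with
  | 0 => nb_one a
  | q.+1 =>
      let b := fun i : 'I_(nb_zero a) => nth 0 (bzps a) i in
      \sum_(t : {ffun 'I_q.+1 -> 'I_(nb_zero a)})
        (b (t ord0) *
         (\prod_(k < q) minn (b (t (widen_ord (leqnSn q) k))) (b (t (lift ord0 k))))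
         * b (t ord_max))
  end.

Definition th_Phi (R : nzRingType) (a : seq bool) : 'M[R]_(nb_one a) :=
  \matrix_(i, j) (((nth 0 (fops a) (minn i j))%:R)%R).

Definition th_ones (R : nzRingType) (k : nat) : 'cV[R]_k := const_mx 1%R.

(* Let B be the 0/1 matrix with rows indexed by the type 1 vertices and columns by the
   type 0 vertices, B_ik = 1 iff the k-th type 0 vertex precedes the i-th type 1 vertex.
   Then (B B^T)_ij counts the type 0 vertices preceding both, i.e. Phi = B B^T, while
   (B^T B)_kl = min(b_k, b_l) and B^T 1 = b.  Hence for p >= 1
   1^T Phi^p 1 = b^T (B^T B)^(p-1) b, and expanding this bilinear form as a sum over
   index sequences gives exactly F_p. *)
From mathcomp Require Import all_boot all_order all_algebra.
From mathcomp Require Import all_classical all_reals.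
Set Implicit Arguments. Unset Strict Implicit. Unset Printing Implicit Defensive.
Import GRing.Theory Num.Theory.
Local Open Scope ring_scope.

Section FfunCons.
Variables (I : finType) (q : nat).

Definition ffun_cons (x : I) (t : {ffun 'I_q -> I}) : {ffun 'I_q.+1 -> I} :=
  [ffun k => if unlift ord0 k is Some k' then t k' else x].

Lemma ffun_cons0 x t : ffun_cons x t ord0 = x.
Proof. by rewrite ffunE unlift_none. Qed.

Lemma ffun_consS x t j : ffun_cons x t (lift ord0 j) = t j.
Proof. by rewrite ffunE liftK. Qed.

Lemma sum_ffun_cons (V : nmodType) (F : {ffun 'I_q.+1 -> I} -> V) :
  \sum_t F t = \sum_x \sum_(t : {ffun 'I_q -> I}) F (ffun_cons x t).
Proof.
rewrite pair_big /= (reindex (fun xt : I * {ffun 'I_q -> I} => ffun_cons xt.1 xt.2)) //=.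
exists (fun t : {ffun 'I_q.+1 -> I} => (t ord0, [ffun k => t (lift ord0 k)])).
  move=> [x t] _ /=; rewrite ffun_cons0; congr pair.
  by apply/ffunP => k; rewrite ffunE ffun_consS.
move=> t _; apply/ffunP => k; rewrite ffunE.
by case: unliftP => [j ->|->]; rewrite ?ffunE.
Qed.

End FfunCons.

Section WalkSums.
Variables (R : pzRingType) (n : nat) (M : 'M[R]_n).

Lemma sum_walks_mulmx_exp q (u : 'rV[R]_n) (v : 'cV[R]_n) :
  \sum_(t : {ffun 'I_q.+1 -> 'I_n})
     (u 0 (t ord0) * (\prod_(k < q) M (t (widen_ord (leqnSn q) k)) (t (lift ord0 k)))
      * v (t ord_max) 0)
  = (u *m M ^+ q *m v) 0 0.
Proof.
elim: q u v => [|q IH] u v.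
  rewrite expr0 mulmx1 mxE sum_ffun_cons; apply: eq_bigr => x _.
  have -> : (ord_max : 'I_1) = ord0 by apply: val_inj.
  rewrite (eq_bigr (fun _ => u 0 x * v x 0)) => [|t _]; last first.
    by rewrite big_ord0 mulr1 ffun_cons0.
  by rewrite big_const card_ffun !card_ord expn0 /= addr0.
rewrite exprS -mulmxE mulmxA -IH sum_ffun_cons exchange_big /=.
apply: eq_bigr => t _; rewrite mxE big_distrl /= big_distrl /=.
apply: eq_bigr => x _.
have -> : (ord_max : 'I_q.+2) = lift ord0 ord_max by apply: val_inj.
rewrite big_ord_recl.
have -> : widen_ord (leqnSn q.+1) ord0 = ord0 by apply: val_inj.
rewrite !ffun_cons0 !ffun_consS -!mulrA; congr (_ * (_ * (_ * _))).
apply: eq_bigr => k _.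
have -> : widen_ord (leqnSn q.+1) (lift ord0 k) = lift ord0 (widen_ord (leqnSn q) k).
  exact: val_inj.
by rewrite !ffun_consS.
Qed.

End WalkSums.

Lemma mulmx_exprS_swap (R : pzRingType) m n (A : 'M[R]_(m, n)) (C : 'M[R]_(n, m)) q :
  (A *m C) ^+ q.+1 = A *m (C *m A) ^+ q *m C.
Proof.
elim: q => [|q IH]; first by rewrite expr1 expr0 mulmx1.
by rewrite exprS IH -mulmxE exprS -mulmxE !mulmxA.
Qed.

Section CountTakeDrop.
Local Open Scope nat_scope.
Variables (T : Type) (x0 : T) (P : pred T).

Lemma count_take_sum s m :
  count P (take m s) = \sum_(j < size s | P (nth x0 s j)) (j < m).
Proof.
rewrite big_mkcond /=.
elim: s m => [|x s IH] [|m] /=; rewrite ?big_ord0 // big_ord_recl /=.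
  by rewrite big1 => [|j _]; case: ifP.
by rewrite IH; case: (P x).
Qed.

Lemma count_drop_sum s m :
  count P (drop m s) = \sum_(j < size s | P (nth x0 s j)) (m <= j).
Proof.
rewrite big_mkcond /=.
elim: s m => [|x s IH] [|m] /=; rewrite ?big_ord0 // big_ord_recl /=.
  by rewrite -{1}(drop0 s) (IH 0); case: (P x).
by rewrite IH; case: (P x).
Qed.

Lemma count_drop_antitone s m n : m <= n -> count P (drop n s) <= count P (drop m s).
Proof.
move=> le_mn; rewrite -(subnK le_mn) -drop_drop.
by rewrite -{2}(cat_take_drop (n - m) (drop m s)) count_cat leq_addl.
Qed.

Lemma count_drop_maxn s m n :
  count P (drop (maxn m n) s) = minn (count P (drop m s)) (count P (drop n s)).
Proof.
case: (leqP m n) => [le_mn|/ltnW le_nm].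
  by rewrite (minn_idPr (count_drop_antitone s le_mn)).
by rewrite (minn_idPl (count_drop_antitone s le_nm)).
Qed.

End CountTakeDrop.

Lemma sorted_nth_minn (s : seq nat) i j :
  sorted leq s -> (i < size s)%N -> (j < size s)%N ->
  nth 0%N s (minn i j) = minn (nth 0%N s i) (nth 0%N s j).
Proof.
move=> s_sorted lt_i lt_j.
have nth_mono k l : (k <= l -> l < size s -> nth 0 s k <= nth 0 s l)%N.
  by move=> le_kl lt_l; apply: sorted_leq_nth; rewrite ?inE //; [exact: leq_trans |
    exact: leq_ltn_trans lt_l].
case: (leqP i j) => [le_ij|/ltnW le_ji].
  by rewrite (minn_idPl (nth_mono _ _ le_ij lt_j)).
by rewrite (minn_idPr (nth_mono _ _ le_ji lt_i)).
Qed.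

Lemma sum_nth_filter_iota (V : nmodType) (P : pred nat) n (F : nat -> V)
    (s := [seq i <- iota 0 n | P i]) :
  \sum_(k < size s) F (nth 0%N s k) = \sum_(j < n | P j) F j.
Proof. by rewrite -(big_mkord P) -big_filter (big_nth 0) big_mkord /index_iota subn0. Qed.

Section CreationSequence.
Variable a : seq bool.
Local Open Scope nat_scope.

Lemma count_iota_nth (P : pred bool) :
  count (fun i => P (nth false a i)) (iota 0 (size a)) = count P a.
Proof. by rewrite -[in RHS](mkseq_nth false a) /mkseq count_map. Qed.

Lemma size_one_pos : size (one_pos a) = nb_one a.
Proof. by rewrite size_filter (count_iota_nth id). Qed.

Lemma size_zero_pos : size (zero_pos a) = nb_zero a.
Proof. by rewrite size_filter (count_iota_nth negb). Qed.

Lemma sorted_one_pos : sorted leq (one_pos a).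
Proof. exact/sorted_filter/iota_sorted/leq_trans. Qed.

Lemma sum_one_pos (V : nmodType) (F : nat -> V) :
  (\sum_(i < nb_one a) F (nth 0 (one_pos a) i) = \sum_(j < size a | ttype a j) F j)%R.
Proof. by rewrite -size_one_pos sum_nth_filter_iota. Qed.

Lemma sum_zero_pos (V : nmodType) (F : nat -> V) :
  (\sum_(k < nb_zero a) F (nth 0 (zero_pos a) k) = \sum_(j < size a | ~~ ttype a j) F j)%R.
Proof. by rewrite -size_zero_pos sum_nth_filter_iota. Qed.

Local Open Scope ring_scope.
Variable R : nzRingType.

Definition zero_before_one : 'M[R]_(nb_one a, nb_zero a) :=
  \matrix_(i, k) (nth 0 (zero_pos a) k < nth 0 (one_pos a) i)%N%:R.

Local Notation B := zero_before_one.

Lemma th_Phi_factor : th_Phi R a = B *m B^T.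
Proof.
apply/matrixP => i j; rewrite !mxE.
under eq_bigr do rewrite !mxE -natrM mulnb -leq_min.
rewrite (sum_zero_pos (fun x => (x < minn (nth 0 (one_pos a) i) (nth 0 (one_pos a) j))%N%:R)).
rewrite (nth_map 0%N); last by rewrite size_one_pos gtn_min ltn_ord.
rewrite sorted_nth_minn ?size_one_pos //; last exact: sorted_one_pos.
by rewrite (count_take_sum false) natr_sum.
Qed.

Lemma tr_zero_before_one_ones k :
  (B^T *m th_ones R (nb_one a)) k 0 = (nth 0 (bzps a) k)%:R.
Proof.
rewrite !mxE; under eq_bigr do rewrite !mxE mulr1.
rewrite (sum_one_pos (fun x => (nth 0 (zero_pos a) k < x)%N%:R)).
by rewrite (nth_map 0%N) ?size_zero_pos // (count_drop_sum false) natr_sum.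
Qed.

Lemma gram_zero_before_one k l :
  (B^T *m B) k l = (minn (nth 0 (bzps a) k) (nth 0 (bzps a) l))%:R.
Proof.
rewrite !mxE; under eq_bigr do rewrite !mxE -natrM mulnb -gtn_max.
rewrite (sum_one_pos (fun x => (maxn (nth 0 (zero_pos a) k) (nth 0 (zero_pos a) l) < x)%N%:R)).
rewrite !(nth_map 0%N) ?size_zero_pos // -count_drop_maxn maxnSS.
by rewrite (count_drop_sum false) natr_sum.
Qed.

End CreationSequence.

Theorem propositionA3 (R : realType) (a : seq bool) :
  nth false a 0 = true ->
  (4 <= size a)%N ->
  tconnected a ->
  (size a - 1 < th_size a)%N ->
  (th_size a < 'C(size a, 2))%N ->
  forall p : nat,
    (th_F a p)%:R = ((th_ones R (nb_one a))^T *m (th_Phi R a) ^+ p *m th_ones R (nb_one a)) 0 0.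
Proof.
move=> _ _ _ _ _ [|q].
  rewrite expr0 mulmx1 !mxE; under eq_bigr do rewrite !mxE mulr1.
  by rewrite sumr_const card_ord.
set B := zero_before_one a R; set one := th_ones R (nb_one a).
have -> : one^T *m th_Phi R a ^+ q.+1 *m one
    = (B^T *m one)^T *m (B^T *m B) ^+ q *m (B^T *m one).
  by rewrite th_Phi_factor mulmx_exprS_swap trmx_mul trmxK !mulmxA.
rewrite -sum_walks_mulmx_exp natr_sum; apply: eq_bigr => t _.
rewrite !natrM natr_prod mxE !tr_zero_before_one_ones.
by congr (_ * _ * _); apply: eq_bigr => k _; rewrite gram_zero_before_one.
Qed.
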